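(* Let $\Gamma$ be a simplicial complex on the vertex set $V_1=\{x_1,\ldots,x_n\}$, and let $\Gamma_1,\ldots,\Gamma_m$ ($m\geq1$) be simplicial subcomplexes of $\Gamma$ with $\Gamma=\bigcup_{j=1}^m\Gamma_j$ (some $\Gamma_j$ may equal $\{\varnothing\}$). Let $y_1,\ldots,y_m$ be new vertices and define \[\widetilde\Gamma=\left\{\sigma\cup\tau:\ \sigma\in\Gamma,\ \tau\subseteq\{y_j:\sigma\in\Gamma_j\}\right\}.\] Then $\widetilde\Gamma$ is contractible.
   Context: Simplicial complexes contain the empty face; $\widetilde\Gamma$ is a simplicial complex on $V_1\cup\{y_1,\ldots,y_m\}$, and contractibility refers to its geometric realization. *)

From HB Require Import structures.
From mathcomp Require Import all_boot all_order all_algebra.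
From mathcomp Require Import all_classical all_reals all_analysis.
Set Implicit Arguments. Unset Strict Implicit. Unset Printing Implicit Defensive.
Import Order.TTheory GRing.Theory Num.Theory.
Import numFieldNormedType.Exports.

Definition simplicial_complex (T : finType) (K : {set {set T}}) : Prop :=
  (finset.set0 : {set T}) \in K /\ (forall s t : {set T}, s \in K -> t \subset s -> t \in K).

(* Gamma-tilde: vertices are  inl x_i  (the old vertices V_1)  and  inr j
   (the new vertex y_j).  Faces are  sigma u tau  with sigma in Gamma and
   tau a subset of {y_j : sigma in Gamma_j}. *)
Definition tilde_complex (n m : nat) (Gamma : {set {set 'I_n}})
    (Gs : 'I_m -> {set {set 'I_n}}) : {set {set ('I_n + 'I_m)%type}} :=
  [set ((@inl 'I_n 'I_m) @: s) :|: ((@inr 'I_n 'I_m) @: t)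
     | s : {set 'I_n} in Gamma,
       t : {set 'I_m} in powerset [set j : 'I_m | s \in Gs j]].

Local Open Scope ring_scope.
Local Open Scope classical_set_scope.

(* Geometric realization of a complex K on the finite vertex type T, as a
   subset of R^T (product = Euclidean topology): the points with nonnegative
   barycentric coordinates summing to 1 whose support is a face of K. *)
Definition geom_real (R : realType) (T : finType) (K : {set {set T}})
    : set {ptws T -> R} :=
  [set x : {ptws T -> R} | (forall v, 0 <= x v) /\ \sum_(v : T) x v = 1 /\
     finset (fun v : T => x v != 0) \in K].

Definition contractible (R : realType) (X : topologicalType) (A : set X) : Prop :=
  exists (x0 : X) (H : R * X -> X),
    A x0 /\
    {within `[0, 1]%classic `*` A, continuous H} /\
    (forall t x, (0 <= t <= 1) -> A x -> A (H (t, x))) /\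
    (forall x, A x -> H (0, x) = x) /\
    (forall x, A x -> H (1, x) = x0).

From mathcomp Require Import all_boot all_order all_algebra.
From mathcomp Require Import all_classical all_reals all_analysis.
From mathcomp Require Import lra.
Import numFieldNormedType.Exports.
Set Implicit Arguments. Unset Strict Implicit. Unset Printing Implicit Defensive.
Import Order.TTheory GRing.Theory Num.Theory.

(* The realization of the complex is contracted onto the new vertex y_j0 by
   moving barycentric weight and renormalising.  On t in [0, 1/2] every old
   coordinate x_v is lowered by 2t, and y_j receives, for each face s of
   Gamma_j, the excess of 2t over the mass of x outside s.  Such weight only
   arrives once every surviving old vertex lies in s, so the support stays a
   face of the complex.  At t = 1/2 the old coordinates have all vanished; on
   [1/2, 1] the weights of the y_j die out while y_j0 gains weight, and any set
   of new vertices is a face because the empty face lies in every Gamma_j.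
   The total weight never vanishes since the Gamma_j cover Gamma. *)

Section PointwiseContinuity.
Context {X : topologicalType} {T : Type} {V : topologicalType}.
Local Open Scope classical_set_scope.

Lemma continuous_ptws (h : X -> {ptws T -> V}) (x : X) :
  (forall t, {for x, continuous (fun z => h z t)}) -> {for x, continuous h}.
Proof.
move=> hc; apply/cvg_sup => t; apply/cvg_image.
  by rewrite eqEsubset; split=> y // _; exists (fun _ => y).
move=> B /= /(hc t); rewrite nbhs_simpl => hB.
exists ((fun f : {ptws T -> V} => f t) @^-1` B) => //.
by apply: image_preimage; rewrite eqEsubset; split=> y // _; exists (fun _ => y).
Qed.

End PointwiseContinuity.

Section Normalize.
Variables (R : numFieldType) (T : finType).
Local Open Scope ring_scope.
Implicit Types (w : T -> R).

Definition normalize w : T -> R := fun a => w a / \sum_b w b.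

Lemma sum_normalize w : \sum_b w b != 0 -> \sum_a normalize w a = 1.
Proof. by move=> w0; rewrite -mulr_suml divff. Qed.

Lemma normalize_ge0 w a : (forall b, 0 <= w b) -> 0 <= normalize w a.
Proof. by move=> w_ge0; rewrite divr_ge0 // sumr_ge0. Qed.

Lemma normalize_eq0 w a : \sum_b w b != 0 -> (normalize w a == 0) = (w a == 0).
Proof. by move=> w0; rewrite mulf_eq0 invr_eq0 (negPf w0) orbF. Qed.

Lemma normalize_id w : \sum_b w b = 1 -> normalize w = w.
Proof. by move=> w1; apply: funext => a; rewrite /normalize w1 divr1. Qed.

End Normalize.

Section RealContinuity.
Variables (R : realType) (X : topologicalType).
Local Open Scope ring_scope.

Lemma continuous_sumr (I : Type) (r : seq I) (P : pred I) (F : I -> X -> R) :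
  (forall i, continuous (F i)) -> continuous (fun x => \sum_(i <- r | P i) F i x).
Proof. by move=> hF; apply: continuous_big => [|i _]; [exact: add_continuous|exact: hF]. Qed.

Lemma normalize_continuous (T : finType) (w : X -> T -> R) (x : X) :
  (forall a, continuous (fun z => w z a)) -> \sum_b w x b != 0 ->
  {for x, continuous (fun z => normalize (w z) : {ptws T -> R})}.
Proof.
move=> w_cont w0; apply: continuous_ptws => a.
by apply: continuousM; [exact: w_cont|apply: continuousV => //; exact: continuous_sumr].
Qed.

End RealContinuity.

Section GeometricRealization.
Variables (R : realType) (T : finType) (K : {set {set T}}).
Local Open Scope ring_scope.

Lemma geom_real_le1 (x : T -> R) a : geom_real K x -> x a <= 1.
Proof.
case=> x_ge0 [<- _]; rewrite (bigD1 a) //= lerDl; exact: sumr_ge0.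
Qed.

Definition vertex_point (b : T) : {ptws T -> R} := fun a => (a == b)%:R.

Lemma geom_real_vertex_point b : [set b] \in K -> geom_real K (vertex_point b).
Proof.
move=> Kb; split; first by move=> a; rewrite ler0n.
split; first by rewrite /vertex_point (bigD1 b) //= eqxx big1 ?addr0 // => a /negPf ->.
congr (_ \in K): Kb; apply/setP => a; rewrite !inE /vertex_point pnatr_eq0.
by case: (a == b).
Qed.

Lemma geom_real_normalize (w : T -> R) :
  (forall b, 0 <= w b) -> 0 < \sum_b w b -> [set a | w a != 0] \in K ->
  geom_real K (normalize w).
Proof.
move=> w_ge0 w_gt0 Kw; have w_neq0 := lt0r_neq0 w_gt0.
split; first by move=> a; exact: normalize_ge0.
split; first exact: sum_normalize.
by congr (_ \in K): Kw; apply/setP => a; rewrite !inE normalize_eq0.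
Qed.

End GeometricRealization.

Section SumSets.
Variables (T1 T2 : finType).
Implicit Types (s : {set T1}) (t : {set T2}).

Lemma mem_imsetU_inl s t v : (inl v \in inl @: s :|: inr @: t) = (v \in s).
Proof.
rewrite finset.in_setU (mem_imset _ _ inl_inj).
suff /negPf -> : inl v \notin inr @: t by rewrite orbF.
by apply/imsetP => -[].
Qed.

Lemma mem_imsetU_inr s t j : (inr j \in inl @: s :|: inr @: t) = (j \in t).
Proof.
rewrite finset.in_setU (mem_imset _ _ inr_inj).
suff /negPf -> : inr j \notin inl @: s by [].
by apply/imsetP => -[].
Qed.

Lemma imsetU_preimset (S : {set T1 + T2}) :
  inl @: (inl @^-1: S) :|: inr @: (inr @^-1: S) = S.
Proof. by apply/setP => -[v|j]; rewrite ?mem_imsetU_inl ?mem_imsetU_inr inE. Qed.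

End SumSets.

Section TildeComplex.
Variables (n m : nat) (Gamma : {set {set 'I_n}}) (Gs : 'I_m -> {set {set 'I_n}}).

Lemma tilde_complexP (S : {set 'I_n + 'I_m}) :
  S \in tilde_complex Gamma Gs <->
  inl @^-1: S \in Gamma /\ forall j, inr j \in S -> inl @^-1: S \in Gs j.
Proof.
split.
  case/imset2P=> s t Gamma_s; rewrite inE => /fintype.subsetP t_sub ->.
  have -> : inl @^-1: (inl @: s :|: inr @: t) = s.
    by apply/setP => v; rewrite inE mem_imsetU_inl.
  by split=> // j; rewrite mem_imsetU_inr => /t_sub; rewrite inE.
case=> Gamma_S Gs_S; rewrite -(imsetU_preimset S).
apply/imset2P; exists (inl @^-1: S) (inr @^-1: S) => //.
by rewrite inE; apply/fintype.subsetP => j; rewrite !inE; exact: Gs_S.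
Qed.

End TildeComplex.

Section Contraction.
Variables (R : realType) (n m : nat) (Gs : 'I_m -> {set {set 'I_n}}) (j0 : 'I_m).
Local Notation V := ('I_n + 'I_m)%type.
Implicit Types (t : R) (x : V -> R) (s : {set 'I_n}).
Local Open Scope ring_scope.

Definition outer_mass x s : R := \sum_(v | v \notin s) x (inl v).

Definition inflow t x (j : 'I_m) : R :=
  x (inr j) + \sum_(s in Gs j) Num.max 0 (2 * t - outer_mass x s).

Definition contraction_weight t x (a : V) : R :=
  match a with
  | inl v => Num.max 0 (x (inl v) - 2 * t)
  | inr j => Num.min 1 (2 - 2 * t) * inflow t x j + (j == j0)%:R * Num.max 0 (2 * t - 1)
  end.

Lemma coord_le_outer_mass x s v :
  (forall b, 0 <= x b) -> v \notin s -> x (inl v) <= outer_mass x s.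
Proof. by move=> x_ge0 vs; rewrite /outer_mass (bigD1 v) //= lerDl sumr_ge0. Qed.

Lemma outer_mass_le_sum x s : (forall b, 0 <= x b) -> outer_mass x s <= \sum_a x a.
Proof.
move=> x_ge0; rewrite big_sumType /= (bigID (fun v => v \notin s)) /= -addrA lerDl.
by rewrite addr_ge0 // sumr_ge0.
Qed.

Lemma inflow_ge0 t x j : (forall b, 0 <= x b) -> 0 <= inflow t x j.
Proof. by move=> x_ge0; rewrite addr_ge0 // sumr_ge0 // => s _; rewrite le_max lexx. Qed.

Lemma contraction_weight_ge0 t x a :
  0 <= t <= 1 -> (forall b, 0 <= x b) -> 0 <= contraction_weight t x a.
Proof.
move=> /andP[t_ge0 t_le1] x_ge0; rewrite /contraction_weight.
case: a => [v|j]; first by rewrite le_max lexx.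
rewrite addr_ge0 ?mulr_ge0 ?ler0n ?inflow_ge0 ?le_max ?lexx //.
by rewrite le_min ler01 /=; lra.
Qed.

Lemma contraction_weight0 x : (forall b, 0 <= x b) -> contraction_weight 0 x = x.
Proof.
move=> x_ge0; apply: funext => -[v|j]; rewrite /contraction_weight mulr0.
  by rewrite subr0 max_r.
rewrite subr0 min_l ?mul1r; last lra.
rewrite max_l ?mulr0 ?addr0; last lra.
rewrite /inflow big1 ?addr0 // => s _; apply: max_l.
by rewrite mulr0 sub0r oppr_le0 sumr_ge0.
Qed.

Lemma contraction_weight1 x :
  (forall b, x b <= 1) -> contraction_weight 1 x = vertex_point R (inr j0).
Proof.
move=> x_le1; apply: funext => -[v|j]; rewrite /contraction_weight /vertex_point mulr1.
  by rewrite max_l //; have := x_le1 (inl v); lra.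
rewrite subrr min_r ?ler01 // mul0r add0r max_r; last lra.
have -> : (2 - 1 : R) = 1 by lra.
by rewrite mulr1 (inj_eq inr_inj).
Qed.

Lemma contraction_weight_continuous (Y : topologicalType) (t : Y -> R) (x : Y -> V -> R) a :
  continuous t -> (forall b, continuous (fun y => x y b)) ->
  continuous (fun y => contraction_weight (t y) (x y) a).
Proof.
move=> t_cont x_cont.
have cst (c : R) : continuous (fun _ : Y => c) by exact: cst_continuous.
have add (f g : Y -> R) : continuous f -> continuous g -> continuous (fun y => f y + g y).
  by move=> cf cg y; apply: cvgD; [exact: cf|exact: cg].
have sub (f g : Y -> R) : continuous f -> continuous g -> continuous (fun y => f y - g y).
  by move=> cf cg y; apply: cvgB; [exact: cf|exact: cg].
have mul (f g : Y -> R) : continuous f -> continuous g -> continuous (fun y => f y * g y).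
  by move=> cf cg y; apply: cvgM; [exact: cf|exact: cg].
have max (f g : Y -> R) :
    continuous f -> continuous g -> continuous (fun y => Num.max (f y) (g y)).
  by move=> cf cg y; exact: (continuous_max (cf y) (cg y)).
have min (f g : Y -> R) :
    continuous f -> continuous g -> continuous (fun y => Num.min (f y) (g y)).
  by move=> cf cg y; exact: (continuous_min (cf y) (cg y)).
have time2 : continuous (fun y => 2 * t y) by exact: (mul _ _ (cst 2) t_cont).
have mass s : continuous (fun y => outer_mass (x y) s).
  by apply: continuous_sumr => v; exact: x_cont.
rewrite /contraction_weight; case: a => [v|j].
  exact: (max _ _ (cst 0) (sub _ _ (x_cont _) time2)).
apply: (add _ _ (mul _ _ (min _ _ (cst 1) (sub _ _ (cst 2) time2)) _)
  (mul _ _ (cst _) (max _ _ (cst 0) (sub _ _ time2 (cst 1))))).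
apply: (add _ _ (x_cont _)); apply: continuous_sumr => s.
exact: (max _ _ (cst 0) (sub _ _ time2 (mass s))).
Qed.

Lemma outer_mass_support x : outer_mass x (inl @^-1: [set a | x a != 0]) = 0.
Proof. by apply: big1 => v; rewrite !inE => /negPn/eqP. Qed.

Lemma contraction_weight_inr_neq0 t x j :
  contraction_weight t x (inr j) != 0 ->
  [\/ x (inr j) != 0, exists2 s, s \in Gs j & outer_mass x s < 2 * t
     | (j == j0) && (1 < 2 * t)].
Proof.
move=> w_neq0; have [x_j|] := eqVneq (x (inr j)) 0; last by move=> ?; apply: Or31.
have [j0_lt|j0_ge] := boolP ((j == j0) && (1 < 2 * t)); first exact: Or33.
have [/exists_inP s_lt|] := boolP [exists (s | s \in Gs j), outer_mass x s < 2 * t].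
  exact: Or32.
rewrite negb_exists_in => /forall_inP s_ge; move: w_neq0; rewrite /contraction_weight.
have -> : (j == j0)%:R * Num.max 0 (2 * t - 1) = 0 :> R.
  by case: (j == j0) j0_ge => /= [t_le|_]; rewrite ?mul0r // max_l ?mulr0 // subr_le0 leNgt.
rewrite /inflow x_j add0r addr0 big1 ?mulr0 ?eqxx // => s /s_ge.
by rewrite -leNgt -subr_le0 => /max_l.
Qed.

Section Invariance.
Variables (Gamma : {set {set 'I_n}}).
Hypotheses (Gamma_cplx : simplicial_complex Gamma)
  (Gs_cplx : forall j, simplicial_complex (Gs j)).

Lemma contraction_weight_inl_supp_sub t x s :
  (forall b, 0 <= x b) -> outer_mass x s <= 2 * t ->
  inl @^-1: [set a | contraction_weight t x a != 0] \subset s.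
Proof.
move=> x_ge0 mass_le; apply/fintype.subsetP => v; rewrite !inE /contraction_weight.
apply: contraNT => vs; rewrite max_l // subr_le0.
exact: le_trans (coord_le_outer_mass x_ge0 vs) mass_le.
Qed.

Lemma contraction_weight_face t x :
  0 <= t <= 1 -> geom_real (tilde_complex Gamma Gs) x ->
  [set a | contraction_weight t x a != 0] \in tilde_complex Gamma Gs.
Proof.
move=> /andP[t_ge0 t_le1] [x_ge0 [x_sum /tilde_complexP [Gamma_s0 Gs_s0]]].
have sub := contraction_weight_inl_supp_sub (t := t) x_ge0.
have mass_s0 : outer_mass x (inl @^-1: [set a | x a != 0]) <= 2 * t.
  by rewrite outer_mass_support mulr_ge0.
have s_s0 := sub _ mass_s0.
apply/tilde_complexP; split; first exact: Gamma_cplx.2 _ _ Gamma_s0 s_s0.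
move=> j; rewrite inE => /contraction_weight_inr_neq0 [x_j|[s Gs_s mass_lt]|].
- by apply: (Gs_cplx j).2 (Gs_s0 j _) s_s0; rewrite inE.
- exact: (Gs_cplx j).2 _ _ Gs_s (sub _ (ltW mass_lt)).
- case/andP=> /eqP -> lt_t; apply: (Gs_cplx j0).2 _ _ (Gs_cplx j0).1 (sub _ _).
  by rewrite (le_trans (outer_mass_le_sum _ x_ge0)) // x_sum ltW.
Qed.

Lemma tilde_complex_vertex j : [set inr j] \in tilde_complex Gamma Gs.
Proof.
apply/tilde_complexP.
have -> : inl @^-1: [set inr j] = finset.set0 :> {set 'I_n} by apply/setP => v; rewrite !inE.
split=> [|j']; first exact: Gamma_cplx.1.
by rewrite inE => /eqP [->]; exact: (Gs_cplx j).1.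
Qed.

Hypothesis Gamma_cover : Gamma = \bigcup_(j < m) Gs j.

Lemma contraction_weight_sum_gt0 t x :
  0 <= t <= 1 -> geom_real (tilde_complex Gamma Gs) x ->
  0 < \sum_a contraction_weight t x a.
Proof.
move=> t01 x_real; have [x_ge0 [x_sum /tilde_complexP [Gamma_s0 _]]] := x_real.
have w_ge0 a := contraction_weight_ge0 a t01 x_ge0.
case/andP: t01 => t_ge0 t_le1.
have [->|t_neq0] := eqVneq t 0; first by rewrite contraction_weight0 // x_sum ltr01.
have t_gt0 : 0 < t by rewrite lt_def t_neq0.
suff [j w_gt0] : exists j, 0 < contraction_weight t x (inr j).
  by apply: lt_le_trans w_gt0 _; rewrite (bigD1 (inr j)) //= lerDl sumr_ge0.
have last_ge0 j : 0 <= (j == j0)%:R * Num.max 0 (2 * t - 1) :> R.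
  by rewrite mulr_ge0 ?ler0n // le_max lexx.
have [t_half|t_half] := lerP (2 * t) 1.
  move: Gamma_s0; rewrite Gamma_cover => /bigcupP [j _ Gs_s0]; exists j.
  have : 2 * t <= inflow t x j.
    rewrite /inflow (bigD1 _ Gs_s0) /= outer_mass_support subr0 max_r ?mulr_ge0 //.
    by rewrite addrCA lerDl addr_ge0 // sumr_ge0 // => s _; rewrite le_max lexx.
  rewrite /contraction_weight /= min_l ?mul1r; last lra.
  by have := last_ge0 j; lra.
exists j0; rewrite /contraction_weight /= eqxx mul1r max_r; last lra.
rewrite ltr_wpDl ?subr_gt0 // mulr_ge0 ?inflow_ge0 // le_min ler01 /=; lra.
Qed.

End Invariance.

End Contraction.

Theorem lemma4p2 (R : realType) (n m : nat) (Gamma : {set {set 'I_n}})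
    (Gs : 'I_m -> {set {set 'I_n}}) :
  (1 <= m)%N ->
  simplicial_complex Gamma ->
  (forall j, simplicial_complex (Gs j)) ->
  (forall j, Gs j \subset Gamma) ->
  Gamma = \bigcup_(j < m) Gs j ->
  @contractible R {ptws ('I_n + 'I_m)%type -> R} (@geom_real R _ (tilde_complex Gamma Gs)).
Proof.
move=> m_gt0 Gamma_cplx Gs_cplx _ Gamma_cover; pose j0 : 'I_m := Ordinal m_gt0.
pose w (p : R * {ptws ('I_n + 'I_m)%type -> R}) := contraction_weight Gs j0 p.1 p.2.
exists (vertex_point R (inr j0)), (fun p => normalize (w p) : {ptws _ -> R}).
have vertex_real := geom_real_vertex_point R (tilde_complex_vertex Gamma_cplx Gs_cplx j0).
split; [exact: vertex_real|split; [|split; [|split]]].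
- apply: continuous_in_subspaceT => -[t x] /set_mem [/= t01 x_real].
  rewrite in_itv /= in t01.
  apply: normalize_continuous => [a|]; last first.
    by rewrite gt_eqF // (contraction_weight_sum_gt0 j0 Gamma_cover).
  apply: contraction_weight_continuous => [p|b p]; first exact: cvg_fst.
  apply: (@cvg_comp _ _ _ snd (fun f : {ptws _ -> R} => f b)); first exact: cvg_snd.
  exact: (@proj_continuous _ (fun _ => R) b).
- move=> t x t01 x_real; rewrite /w /=; apply: geom_real_normalize.
  + by move=> a; exact: contraction_weight_ge0 t01 x_real.1.
  + exact (contraction_weight_sum_gt0 j0 Gamma_cover t01 x_real).
  + exact: contraction_weight_face.
- by move=> x [x_ge0 [x_sum _]]; rewrite /w /= contraction_weight0 // normalize_id.
- move=> x x_real; rewrite /w /= contraction_weight1 => [|b]; last exact: geom_real_le1 x_real.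
  by rewrite normalize_id //; case: vertex_real => _ [].
Qed.
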